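(* Let $I\subset\mathbb{R}$ be an interval and $(Y(s))_{s\in I}$ a centered Gaussian process whose covariance $r(s,t)=\mathbb{E}[Y(s)Y(t)]$ admits partial derivatives $r^{(a,b)}=\partial_1^a\partial_2^b r$ for $a,b\in\{0,1\}$ (so that $r^{(a,b)}(s,t)=\mathbb{E}[Y^{(a)}(s)Y^{(b)}(t)]$). Assume there is a constant $C$ with $|r^{(a,b)}(s,t)|\le C$ for all $a,b\in\{0,1\}$ and $s,t\in I$. Then for all $s,\tau$ with $s,s+\tau\in I$, \[\big|\det\Sigma(s,s+\tau)-\det\Omega(s)\,\det\Omega(s+\tau)\big|\le 20\,C^2M(\tau)^2 .\]
   Context: $\Omega(s)=\operatorname{Cov}(Y(s),Y'(s))$ is the $2\times2$ covariance matrix, with entries $r(s,s)$, $r^{(1,0)}(s,s)$, $r^{(1,1)}(s,s)$. $\Sigma(s,t)=\operatorname{Cov}(Y(s),Y(t),Y'(s),Y'(t))$ is the $4\times 4$ covariance matrix of this vector (entries given by the appropriate $r^{(a,b)}$). $M(\tau)=\sup_{s}\sup_{a,b\in\{0,1\}}|r^{(a,b)}(s,s+\tau)|$, the supremum over $s$ with $s,s+\tau\in I$. *)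

From HB Require Import structures.
From mathcomp Require Import all_boot all_order all_algebra.
From mathcomp Require Import all_classical all_reals all_analysis.
Set Implicit Arguments. Unset Strict Implicit. Unset Printing Implicit Defensive.
Import Order.TTheory GRing.Theory Num.Theory.
Import numFieldNormedType.Exports.
Local Open Scope classical_set_scope.
Local Open Scope ring_scope.

Definition centered_gaussian_rv {d} {T : measurableType d} {R : realType}
  (P : probability T R) (X : T -> R) : Prop :=
  (exists2 sigma : R, 0 < sigma &
     forall A : set R, measurable A -> P (X @^-1` A) = normal_prob 0 sigma A)
  \/ P [set w | X w = 0] = 1%E.

Definition centered_gaussian_process {d} {T : measurableType d} {R : realType}
  (P : probability T R) (I : set R) (Y : R -> T -> R) : Prop :=
  (forall s, I s -> measurable_fun setT (Y s)) /\
  forall (n : nat) (ts cs : 'I_n -> R), (forall i, I (ts i)) ->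
    centered_gaussian_rv P (fun w => \sum_(i < n) cs i * Y (ts i) w).

(* f has derivative l at x relative to the set I (one-sided at endpoints). *)
Definition has_deriv_within {R : realType} (I : set R) (f : R -> R) (x l : R)
  : Prop :=
  (fun u => (f u - f x) / (u - x)) @ within (fun u => I u /\ u != x) (nbhs x)
    --> l.

(* r^{(a,b)} for a, b in {0,1} (false = 0, true = 1). *)
Definition rab {R : realType} (r r01 r10 r11 : R -> R -> R) (a b : bool)
  : R -> R -> R :=
  if a then (if b then r11 else r10) else (if b then r01 else r).

(* Sigma(s,t) = Cov(Y(s), Y(t), Y'(s), Y'(t)) : entries r^{(a_i,a_j)}(u_i,u_j)
   where (a_0,u_0)=(0,s), (a_1,u_1)=(0,t), (a_2,u_2)=(1,s), (a_3,u_3)=(1,t). *)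
Definition Sigma {R : realType} (r r01 r10 r11 : R -> R -> R) (s t : R)
  : 'M[R]_4 :=
  \matrix_(i < 4, j < 4)
    rab r r01 r10 r11 (2 <= i)%N (2 <= j)%N
      (if odd i then t else s) (if odd j then t else s).

(* Omega(s) = Cov(Y(s), Y'(s)). *)
Definition Omega {R : realType} (r r01 r10 r11 : R -> R -> R) (s : R)
  : 'M[R]_2 :=
  \matrix_(i < 2, j < 2) rab r r01 r10 r11 (i == 1%N :> nat) (j == 1%N :> nat) s s.

Definition Mtau {R : realType} (I : set R) (r r01 r10 r11 : R -> R -> R)
  (tau : R) : R :=
  sup [set x : R | exists s, [/\ I s, I (s + tau) &
        exists a b, x = `|rab r r01 r10 r11 a b s (s + tau)|]].

(* Only the covariance structure of Y matters (the Gaussian hypothesis is used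
   just for the measurability of each Y s): r is a symmetric positive
   semidefinite kernel on I.

   Expanding det Sigma(s, t), t = s + tau, along the rows of (Y s, Y' s), the
   product det Omega(s) * det Omega(t) is one of six products of 2x2 minors;
   each of the other five involves at least two covariances between the times
   s and t, hence is at most 4 C^2 M(tau)^2.  Since M(tau) only controls the
   entries at (s, t), the entries at (t, s) are handled by the symmetries
   r10(x, y) = r01(y, x), which follows from r(x, y) = r(y, x), and
   r11(x, y) = r11(y, x).

   The latter is a statement about mixed partial derivatives without any
   continuity hypothesis, and is proved through the covariance structure.  A
   difference quotient (Y v - Y t) / (v - t) has variance at most C (mean value
   theorem, |r11| <= C).  Averages of N such quotients, with the points v chosen
   one after the other ever closer to t, have nearly constant mutual
   covariances r11(t, t); two such averages are then L^2-close, so the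
   covariance of an average with any combination of variance at most C is close
   to the value sum_i c_i r01(x_i, t) predicted for Y'(t).  Pairing the
   difference quotients at s with such an average in the two possible orders
   of limits yields r11(s, t) and r11(t, s), which are therefore equal. *)

From HB Require Import structures.
From mathcomp Require Import all_boot all_order all_algebra.
From mathcomp Require Import all_classical all_reals all_analysis.
From mathcomp Require Import ring lra measurable_realfun.
Import Order.TTheory GRing.Theory Num.Theory.
Import numFieldNormedType.Exports.
Local Open Scope classical_set_scope.
Local Open Scope ring_scope.
Set Implicit Arguments. Unset Strict Implicit.

Section DerivativeWithin.
Context {R : realType} (I : set R).

Definition dnbhs_in (x : R) := within (fun u => I u /\ u != x) (nbhs x).

#[global] Instance dnbhs_in_filter x : Filter (dnbhs_in x).
Proof. exact: within_filter. Qed.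

Hypothesis I_itv : is_interval I.

Lemma interval_mem a b x : I a -> I b -> a <= x <= b -> I x.
Proof. by move=> Ia Ib; apply: I_itv. Qed.

Lemma within_cvg_dnbhs_in (D : set R) x :
  (forall u, D u -> u != x) -> (\forall u \near x, D u -> I u) ->
  within D (nbhs x) --> dnbhs_in x.
Proof.
move=> Dx DI P; rewrite !nbhs_simpl /dnbhs_in /within /= => IP.
by apply: filterS2 IP DI => u IP DI Du; apply: IP; split; [exact: DI|exact: Dx].
Qed.

Lemma at_right_cvg_dnbhs_in a b : I a -> I b -> a < b -> a^'+ --> dnbhs_in a.
Proof.
move=> Ia Ib ab; apply: within_cvg_dnbhs_in => [u /gt_eqF->//|].
near=> u => au; apply: (interval_mem Ia Ib); rewrite (ltW au) /=.
by apply: ltW; near: u; exact: lt_nbhsl.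
Unshelve. all: by end_near. Qed.

Lemma at_left_cvg_dnbhs_in a b : I a -> I b -> a < b -> b^'- --> dnbhs_in b.
Proof.
move=> Ia Ib ab; apply: within_cvg_dnbhs_in => [u /lt_eqF->//|].
near=> u => ub; apply: (interval_mem Ia Ib); rewrite (ltW ub) andbT.
have : - u < - a by near: u; apply: Nlt_nbhsl; rewrite ltrN2.
by rewrite ltrN2 => /ltW.
Unshelve. all: by end_near. Qed.

Lemma dnbhs_cvg_dnbhs_in a b x : I a -> I b -> a < x < b -> x^' --> dnbhs_in x.
Proof.
move=> Ia Ib /andP[ax xb]; apply: within_cvg_dnbhs_in => //.
have ax' : \forall u \near x, - u < - a by apply: Nlt_nbhsl; rewrite ltrN2.
apply: filterS2 ax' (lt_nbhsl xb) => u; rewrite ltrN2 => au ub _.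
by apply: (interval_mem Ia Ib); rewrite !ltW.
Qed.

Lemma dnbhs_in_proper x y : I x -> I y -> y != x -> ProperFilter (dnbhs_in x).
Proof.
move=> Ix Iy yx; apply: Build_ProperFilter; case: (ltgtP x y) yx => // [xy|xy] _ F0.
- have := at_right_cvg_dnbhs_in Ix Iy xy F0; rewrite nbhs_simpl.
  exact: filter_not_empty.
- have := at_left_cvg_dnbhs_in Iy Ix xy F0; rewrite nbhs_simpl.
  exact: filter_not_empty.
Qed.

Lemma cvg_dnbhs_in_of_deriv f x l :
  has_deriv_within I f x l -> f @ dnbhs_in x --> f x.
Proof.
move=> df.
have dx : (fun u => u - x) @ dnbhs_in x --> 0.
  rewrite -(subrr x); apply: cvgB; last exact: cvg_cst.
  exact: (cvg_trans (cvg_within _) cvg_id).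
have fx_lim : (fun u => (f u - f x) / (u - x) * (u - x) + f x) @ dnbhs_in x --> f x.
  by rewrite -[X in _ --> X]add0r -(mulr0 l); apply: cvgD; [apply: cvgM|apply: cvg_cst].
apply: cvg_trans _ fx_lim; apply: near_eq_cvg; rewrite near_withinE; near=> u.
by move=> [_ ux]; rewrite /= divfK ?subrK // subr_eq0.
Unshelve. all: by end_near. Qed.

Lemma is_derive_of_deriv_within a b f x l : I a -> I b -> a < x < b ->
  has_deriv_within I f x l -> is_derive x 1 f l.
Proof.
move=> Ia Ib axb df; apply/is_derive1_caratheodory.
exists (fun z => if z == x then l else (f z - f x) / (z - x)); split.
- move=> z; case: eqVneq => [->|zx]; first by rewrite !subrr mulr0.
  by rewrite divfK // subr_eq0.
- apply/continuous_withinNx; rewrite eqxx.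
  have dfx : (fun u => (f u - f x) / (u - x)) @ x^' --> l.
    exact: cvg_trans (cvg_app _ (dnbhs_cvg_dnbhs_in Ia Ib axb)) df.
  apply: cvg_trans _ dfx; apply: near_eq_cvg; near=> z; rewrite ifN //.
  by near: z; exact: nbhs_dnbhs_neq.
- by rewrite eqxx.
Unshelve. all: by end_near. Qed.

Lemma continuous_of_deriv_within a b f x l : I a -> I b -> a < x < b ->
  has_deriv_within I f x l -> {for x, continuous f}.
Proof.
move=> Ia Ib axb /(cvg_dnbhs_in_of_deriv) fx; apply/continuous_withinNx.
exact: cvg_trans (cvg_app _ (dnbhs_cvg_dnbhs_in Ia Ib axb)) fx.
Qed.

Lemma deriv_within_lipschitz f f' (K : R) :
  (forall x, I x -> has_deriv_within I f x (f' x)) ->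
  (forall x, I x -> `|f' x| <= K) ->
  forall a b, I a -> I b -> `|f b - f a| <= K * `|b - a|.
Proof.
move=> df f'K.
suff lip_lt a b : I a -> I b -> a < b -> `|f b - f a| <= K * (b - a).
  move=> a b Ia Ib; case: (ltgtP a b) => [ab|ba|->].
  - by rewrite [`|b - a|]gtr0_norm ?subr_gt0 //; exact: lip_lt.
  - rewrite distrC [`|b - a|]distrC [`|a - b|]gtr0_norm ?subr_gt0 //.
    exact: lip_lt.
  - by rewrite !subrr normr0 mulr0.
move=> Ia Ib ab.
have Iab x : x \in `]a, b[ -> I x.
  by move=> xab; apply: (interval_mem Ia Ib); rewrite !ltW ?(itvP xab).
have [c cab ->] : exists2 c, c \in `]a, b[ & f b - f a = f' c * (b - a).
  apply: MVT => // [x xab|].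
    apply: (is_derive_of_deriv_within Ia Ib); first by rewrite !(itvP xab).
    exact/df/Iab.
  apply/continuous_within_itvP => //; split.
  - move=> x xab; apply: (continuous_of_deriv_within Ia Ib); first by rewrite !(itvP xab).
    exact/df/Iab.
  - exact: cvg_trans (cvg_app _ (at_right_cvg_dnbhs_in Ia Ib ab))
      (cvg_dnbhs_in_of_deriv (df a Ia)).
  - exact: cvg_trans (cvg_app _ (at_left_cvg_dnbhs_in Ia Ib ab))
      (cvg_dnbhs_in_of_deriv (df b Ib)).
rewrite normrM [`|b - a|]gtr0_norm ?subr_gt0 // ler_pM2r ?subr_gt0 //.
by apply/f'K/Iab.
Qed.

End DerivativeWithin.

Lemma cvg_sum_seq {R : numFieldType} {T : Type} (F : set_system T) {FF : Filter F}
    (A : eqType) (s : seq A) (f : A -> T -> R) (l : A -> R) :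
  (forall i, i \in s -> f i @ F --> l i) ->
  \sum_(i <- s) f i x @[x --> F] --> \sum_(i <- s) l i.
Proof.
elim: s => [|i s IH] fl.
  by rewrite big_nil; under eq_fun do rewrite big_nil; exact: cvg_cst.
rewrite big_cons; under eq_fun do rewrite big_cons.
apply: cvgD; first by apply: fl; exact: mem_head.
by apply: IH => j js; apply: fl; rewrite inE js orbT.
Qed.

Lemma near_all_seq {T : Type} (F : set_system T) {FF : Filter F}
    (A : eqType) (s : seq A) (P : A -> T -> bool) :
  (forall a, a \in s -> \forall z \near F, P a z) ->
  \forall z \near F, all (P^~ z) s.
Proof.
elim: s => [|a s IH] Ps; first exact: nearW.
apply: filterS2 (Ps a (mem_head _ _)) (IH _) => [z /= -> //|b bs].
by apply: Ps; rewrite inE bs orbT.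
Qed.

Lemma near_pairwise_seq {T : eqType} (F : set_system T) {PF : ProperFilter F}
    (Q : set T) (P : rel T) (bs : seq T) (n : nat) :
  (\forall z \near F, Q z) -> (forall y, Q y -> \forall z \near F, P y z) ->
  (forall b, b \in bs -> \forall z \near F, P b z) ->
  exists vs, [/\ size vs = n, forall v, v \in vs -> Q v,
                 allrel P bs vs & pairwise P vs].
Proof.
move=> nearQ nearP nearPbs.
elim: n => [|n [vs [vsn Qvs Pbs pw]]]; first by exists [::]; rewrite allrel0r.
have : \forall z \near F, [/\ Q z, all (P^~ z) vs & all (P^~ z) bs].
  near=> z; split; near: z; first exact: nearQ.
    by apply: near_all_seq => v /Qvs; exact: nearP.
  exact: near_all_seq.
move=> /filter_ex[z [Qz Pvsz Pbsz]].
exists (rcons vs z); split.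
- by rewrite size_rcons vsn.
- by move=> v; rewrite mem_rcons inE => /orP[/eqP->|/Qvs].
- by rewrite -cats1 allrel_catr allrel1r Pbs Pbsz.
- by rewrite pairwise_rcons Pvsz pw.
Unshelve. all: by end_near. Qed.

Section Averages.
Context {R : realFieldType} {T : eqType}.

Lemma sumr_const_seq (s : seq T) (c : R) : \sum_(x <- s) c = (size s)%:R * c.
Proof. by rewrite big_const_seq count_predT iter_addr_0 mulr_natl. Qed.

Lemma sum_pairwise_le (X : T -> T -> R) (s : seq T) (c d : R) :
  (forall x y, x \in s -> y \in s -> X x y = X y x) ->
  (forall x, x \in s -> X x x <= d) ->
  pairwise (fun x y => X x y <= c) s ->
  \sum_(x <- s) \sum_(y <- s) X x y <=
    (size s)%:R * d + (size s)%:R * ((size s)%:R - 1) * c.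
Proof.
elim/last_ind: s => [|s x IH] Xsym Xd; first by rewrite !big_nil !mul0r addr0.
rewrite pairwise_rcons => /andP[/allP sx ps].
have in_s y : y \in s -> y \in rcons s x by rewrite mem_rcons inE => ->; rewrite orbT.
have x_in : x \in rcons s x by rewrite mem_rcons mem_head.
have col_le : \sum_(y <- s) X y x <= (size s)%:R * c.
  rewrite -sumr_const_seq big_seq [X in _ <= X]big_seq.
  by apply: ler_sum => y /sx.
rewrite -cats1 big_cat big_seq1 /=; under eq_bigr do rewrite big_cat big_seq1.
rewrite big_cat big_seq1 big_split /=.
have -> : \sum_(z <- s) X x z = \sum_(y <- s) X y x.
  by rewrite big_seq [RHS]big_seq; apply: eq_bigr => y ys; rewrite Xsym // in_s.
have IHs := IH (fun y z ys zs => Xsym y z (in_s y ys) (in_s z zs))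
  (fun y ys => Xd y (in_s y ys)) ps.
have xx := Xd x x_in.
by rewrite size_cat /= addn1 -natr1; move: IHs col_le xx; nra.
Qed.

Lemma avg_dist_le (s : seq T) (F : T -> R) (c e : R) : s != [::] ->
  (forall x, x \in s -> `|F x - c| <= e) ->
  `|(size s)%:R^-1 * \sum_(x <- s) F x - c| <= e.
Proof.
move=> s0 Fc; have n_gt0 : 0 < (size s)%:R :> R by rewrite ltr0n lt0n size_eq0.
have -> : (size s)%:R^-1 * \sum_(x <- s) F x - c =
          (size s)%:R^-1 * \sum_(x <- s) (F x - c).
  by rewrite big_split /= sumrN sumr_const_seq mulrDr mulrN mulKf ?lt0r_neq0.
rewrite normrM normfV [`|_%:R|]ger0_norm // ler_pdivrMl //.
apply: le_trans (ler_norm_sum _ _ _) _.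
by rewrite -sumr_const_seq big_seq [X in _ <= X]big_seq; apply: ler_sum => x /Fc.
Qed.

End Averages.

Section KernelCombinations.
Context {R : realFieldType} (r : R -> R -> R).
Implicit Types (u w : seq (R * R)) (us ws : seq (seq (R * R))).

(* A combination u : seq (R * R) stands for the random variable
   \sum_(p <- u) p.1 * Y p.2, so that kdot u w is the covariance of u and w. *)
Definition kdot u w : R := \sum_(p <- u) \sum_(q <- w) p.1 * q.1 * r p.2 q.2.

Definition cscale (c : R) u := [seq (c * p.1, p.2) | p <- u].

Definition cdiff u w := u ++ cscale (-1) w.

Definition dquot (y v : R) := [:: ((v - y)^-1, v); (- (v - y)^-1, y)].

Definition cavg us := cscale (size us)%:R^-1 (flatten us).

Definition dquot_avg (t : R) (vs : seq R) := cavg [seq dquot t v | v <- vs].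

Lemma kdot_catl u1 u2 w : kdot (u1 ++ u2) w = kdot u1 w + kdot u2 w.
Proof. exact: big_cat. Qed.

Lemma kdot_catr u w1 w2 : kdot u (w1 ++ w2) = kdot u w1 + kdot u w2.
Proof. by rewrite /kdot -big_split; apply: eq_bigr => p _; rewrite big_cat. Qed.

Lemma kdot_scalel c u w : kdot (cscale c u) w = c * kdot u w.
Proof.
rewrite /kdot big_map mulr_sumr; apply: eq_bigr => p _; rewrite mulr_sumr.
by apply: eq_bigr => q _ /=; rewrite !mulrA.
Qed.

Lemma kdot_scaler c u w : kdot u (cscale c w) = c * kdot u w.
Proof.
rewrite /kdot mulr_sumr; apply: eq_bigr => p _; rewrite big_map mulr_sumr.
by apply: eq_bigr => q _ /=; ring.
Qed.

Lemma kdot_flattenl us w : kdot (flatten us) w = \sum_(u <- us) kdot u w.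
Proof.
elim: us => [|u us IH]; first by rewrite big_nil /kdot big_nil.
by rewrite big_cons /= kdot_catl IH.
Qed.

Lemma kdot_flattenr u ws : kdot u (flatten ws) = \sum_(w <- ws) kdot u w.
Proof.
elim: ws => [|w ws IH]; last by rewrite big_cons /= kdot_catr IH.
by rewrite big_nil /kdot big1 // => p _; rewrite big_nil.
Qed.

Lemma kdot_cavgr u ws : kdot u (cavg ws) = (size ws)%:R^-1 * \sum_(w <- ws) kdot u w.
Proof. by rewrite kdot_scaler kdot_flattenr. Qed.

Lemma kdot_cavg us ws : kdot (cavg us) (cavg ws) =
  (size us)%:R^-1 * ((size ws)%:R^-1 * \sum_(u <- us) \sum_(w <- ws) kdot u w).
Proof.
rewrite kdot_scalel kdot_scaler kdot_flattenl; congr (_ * (_ * _)).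
by apply: eq_bigr => u _; rewrite kdot_flattenr.
Qed.

Lemma kdot_dquotr u y v :
  kdot u (dquot y v) = \sum_(p <- u) p.1 * ((r p.2 v - r p.2 y) / (v - y)).
Proof. by apply: eq_bigr => p _; rewrite /dquot !big_cons big_nil /=; ring. Qed.

Lemma kdot_cdiffr u w1 w2 : kdot u (cdiff w1 w2) = kdot u w1 - kdot u w2.
Proof. by rewrite kdot_catr kdot_scaler mulN1r. Qed.

Lemma kdot_cdiff u w : kdot (cdiff u w) (cdiff u w) =
  kdot u u - kdot u w - kdot w u + kdot w w.
Proof. by rewrite !kdot_catl !kdot_catr !kdot_scalel !kdot_scaler; ring. Qed.

Lemma kdot_cavg_self_le us (c d : R) : us != [::] ->
  (forall u w, u \in us -> w \in us -> kdot u w = kdot w u) ->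
  (forall u, u \in us -> kdot u u <= d) ->
  pairwise (fun u w => kdot u w <= c) us ->
  kdot (cavg us) (cavg us) <= c + (d - c) / (size us)%:R.
Proof.
move=> us0 sym diag pw; have n_gt0 : 0 < (size us)%:R :> R.
  by rewrite ltr0n lt0n size_eq0.
rewrite kdot_cavg mulrA -invfM ler_pdivrMl ?mulr_gt0 //.
apply: le_trans (sum_pairwise_le sym diag pw) _; rewrite le_eqVlt; apply/orP; left.
by apply/eqP; field; rewrite gt_eqF.
Qed.

Lemma kdot_cavg_ge us ws (c : R) : us != [::] -> ws != [::] ->
  (forall u w, u \in us -> w \in ws -> c <= kdot u w) ->
  c <= kdot (cavg us) (cavg ws).
Proof.
move=> us0 ws0 cle; have pos (s : seq (seq (R * R))) : s != [::] -> 0 < (size s)%:R :> R.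
  by move=> s0; rewrite ltr0n lt0n size_eq0.
rewrite kdot_cavg mulrA -invfM ler_pdivlMl ?mulr_gt0 ?pos //.
rewrite -[X in X <= _]mulrA -sumr_const_seq big_seq [X in _ <= X]big_seq.
apply: ler_sum => u uus; rewrite -sumr_const_seq big_seq [X in _ <= X]big_seq.
by apply: ler_sum => w wws; apply: cle.
Qed.

Variable I : set R.
Hypothesis r_sym : forall x y, I x -> I y -> r x y = r y x.

Lemma dquot_supp y v : I y -> I v -> {in dquot y v, forall p, I p.2}.
Proof. by move=> Iy Iv p; rewrite !inE => /orP[]/eqP->. Qed.

Lemma cscale_supp c u : {in u, forall p, I p.2} -> {in cscale c u, forall p, I p.2}.
Proof. by move=> Iu _ /mapP[p /Iu Ip ->]. Qed.

Lemma cat_supp u w : {in u, forall p, I p.2} -> {in w, forall p, I p.2} ->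
  {in u ++ w, forall p, I p.2}.
Proof. by move=> Iu Iw p; rewrite mem_cat => /orP[/Iu|/Iw]. Qed.

Lemma dquot_avg_supp t vs : I t -> {in vs, forall v, I v} ->
  {in dquot_avg t vs, forall p, I p.2}.
Proof.
move=> It Ivs; apply: cscale_supp => p /flatten_mapP[v /Ivs Iv].
exact: dquot_supp.
Qed.

Lemma kdot_sym u w : {in u, forall p, I p.2} -> {in w, forall q, I q.2} ->
  kdot u w = kdot w u.
Proof.
move=> Iu Iw; rewrite /kdot exchange_big /=; apply: eq_big_seq => q /Iw Iq.
by apply: eq_big_seq => p /Iu Ip; rewrite r_sym //; ring.
Qed.

Definition psd_on := forall u, {in u, forall p, I p.2} -> 0 <= kdot u u.

Hypothesis r_psd : psd_on.

Lemma kdot_le_amgm u w (lam : R) : {in u, forall p, I p.2} ->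
  {in w, forall q, I q.2} -> 0 < lam ->
  `|kdot u w| <= (lam * kdot u u + kdot w w / lam) / 2.
Proof.
move=> Iu Iw lam0.
have Icat c : {in cscale lam u ++ cscale c w, forall p, I p.2}.
  by apply: cat_supp; apply: cscale_supp.
have quad c : kdot (cscale lam u ++ cscale c w) (cscale lam u ++ cscale c w) =
    lam * (lam * kdot u u + c ^+ 2 * (kdot w w / lam) + 2 * c * kdot u w).
  rewrite !kdot_catl !kdot_catr !kdot_scalel !kdot_scaler (kdot_sym Iw Iu).
  by field; rewrite gt_eqF.
have := r_psd (Icat (-1)); have := r_psd (Icat 1).
rewrite !quad !pmulr_rge0 // ler_norml; lra.
Qed.

End KernelCombinations.

Section CovarianceKernel.
Context d (T : measurableType d) (R : realType) (P : probability T R).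
Variables (I : set R) (Y : R -> T -> R) (r : R -> R -> R).
Hypothesis Y_meas : forall s, I s -> measurable_fun setT (Y s).
Hypothesis E_YY : forall s t, I s -> I t -> ('E_P[Y s \* Y t])%E = (r s t)%:E.

Lemma YY_Lfun1 x y : I x -> I y -> Y x \* Y y \in Lfun P 1.
Proof.
move=> Ix Iy; have mYY : measurable_fun setT (Y x \* Y y).
  by apply: measurable_funM; apply: Y_meas.
apply/Lfun1_integrable/integrableP; split; first exact/measurable_EFinP.
by rewrite integral_fin_num_abs //; have := E_YY Ix Iy; rewrite unlock => ->.
Qed.

Lemma expectation_sum_seq (A : eqType) (s : seq A) (F : A -> T -> R) :
  (forall i, i \in s -> F i \in Lfun P 1) ->
  ('E_P[\sum_(i <- s) F i] = \sum_(i <- s) 'E_P[F i])%E.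
Proof.
move=> FL; rewrite -[in LHS](big_map F xpredT idfun) expectation_sum.
  by rewrite big_map.
by move=> X /mapP[i si ->]; apply: FL.
Qed.

Definition comb_rv (u : seq (R * R)) : T -> R := \sum_(p <- u) p.1 \o* Y p.2.

Lemma expectation_comb_rvM u w : {in u, forall p, I p.2} -> {in w, forall q, I q.2} ->
  ('E_P[comb_rv u \* comb_rv w])%E = (kdot r u w)%:E.
Proof.
move=> Iu Iw.
have -> : comb_rv u \* comb_rv w =
    \sum_(p <- u) \sum_(q <- w) (p.1 * q.1) \o* (Y p.2 \* Y q.2).
  apply/funext => z; rewrite /comb_rv /= !fct_sumE mulr_suml.
  apply: eq_bigr => p _; rewrite fct_sumE mulr_sumr.
  by apply: eq_bigr => q _ /=; ring.
have pqL p q : p \in u -> q \in w -> (p.1 * q.1) \o* (Y p.2 \* Y q.2) \in Lfun P 1.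
  by move=> /Iu Ip /Iw Iq; apply: Lfun_scale => //; apply: YY_Lfun1.
rewrite expectation_sum_seq => [|p pu]; last first.
  by rewrite big_seq; apply: rpred_sum => q qw; apply: pqL.
rewrite /kdot -sumEFin; apply: eq_big_seq => p pu.
rewrite expectation_sum_seq => [|q qw]; last exact: pqL.
rewrite -sumEFin; apply: eq_big_seq => q qw.
have [Ip Iq] := (Iu p pu, Iw q qw).
by rewrite expectationZl ?YY_Lfun1 // E_YY.
Qed.

Lemma cov_kernel_psd : psd_on r I.
Proof.
move=> u Iu; rewrite -lee_fin -expectation_comb_rvM //.
by apply: expectation_ge0 => z /=; rewrite -expr2 sqr_ge0.
Qed.

Lemma cov_kernel_sym x y : I x -> I y -> r x y = r y x.
Proof.
move=> Ix Iy; apply: EFin_inj; rewrite -E_YY // -E_YY //.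
by congr ('E_P[_])%E; apply/funext => z /=; rewrite mulrC.
Qed.

End CovarianceKernel.

Lemma approx_params {R : archiFieldType} (C eta : R) : 0 <= C -> 0 < eta ->
  exists eps lam (N : nat), [/\ 0 < eps, 0 < lam, (0 < N)%N &
    eps + (lam * C + (4 * C / N%:R + 8 * eps) / lam) / 2 <= eta].
Proof.
move=> C0 eta0; pose lam := eta / (2 * (C + 1) + eta).
have den0 : 0 < 2 * (C + 1) + eta by rewrite addr_gt0 ?mulr_gt0 ?ltr_wpDl.
have lam0 : 0 < lam by rewrite divr_gt0.
have lam1 : lam <= 1 by rewrite ler_pdivrMr // mul1r; lra.
have lamC : lam * C <= eta / 2.
  rewrite mulrAC ler_pdivrMr // mulrAC ler_pdivlMr //.
  by rewrite -mulrA ler_pM2l //; lra.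
clearbody lam; pose N := (Num.truncn (8 * C / (lam * eta))).+1.
have NC : 8 * C / (lam * eta) < N%:R := truncnS_gt _.
have N0 : 0 < N%:R :> R by rewrite ltr0n.
have lam_eta : 0 < lam * eta := mulr_gt0 lam0 eta0.
exists (lam * eta / 16), lam, N; split => //; first lra.
have CN : 4 * C / N%:R / lam <= eta / 2.
  rewrite !ler_pdivrMr //; move: NC; rewrite ltr_pdivrMr ?mulr_gt0 //; nra.
have e8 : 8 * (lam * eta / 16) / lam = eta / 2 by field; rewrite gt_eqF.
have : lam * eta <= eta by apply: ler_piMl => //; exact: ltW.
rewrite (mulrDl (4 * C / N%:R)) e8; lra.
Qed.

Section DifferentiableKernel.
Context {R : realType} (I : set R) (r r01 r10 r11 : R -> R -> R) (C : R).
Hypothesis I_itv : is_interval I.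
Hypothesis r_sym : forall x y, I x -> I y -> r x y = r y x.
Hypothesis r_psd : psd_on r I.
Hypothesis r01_deriv :
  forall x y, I x -> I y -> has_deriv_within I (fun v => r x v) y (r01 x y).
Hypothesis r10_deriv :
  forall x y, I x -> I y -> has_deriv_within I (fun u => r u y) x (r10 x y).
Hypothesis r11_deriv :
  forall x y, I x -> I y -> has_deriv_within I (fun u => r01 u y) x (r11 x y).
Hypothesis r11_bound : forall x y, I x -> I y -> `|r11 x y| <= C.
Variables a b : R.
Hypotheses (Ia : I a) (Ib : I b) (ab : a != b).

Lemma proper_dnbhs_in x : I x -> ProperFilter (dnbhs_in I x).
Proof.
move=> Ix; have [<-|ax] := eqVneq a x.
  by apply: (dnbhs_in_proper I_itv Ia Ib); rewrite eq_sym.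
by apply: (dnbhs_in_proper I_itv Ix Ia).
Qed.

Lemma r10_r01 x y : I x -> I y -> r10 x y = r01 y x.
Proof.
move=> Ix Iy; have PF := proper_dnbhs_in Ix.
apply: (cvg_unique (@Rhausdorff R) (r10_deriv Ix Iy)).
apply: cvg_trans _ (r01_deriv Iy Ix); apply: near_eq_cvg.
rewrite near_withinE; near=> u => -[Iu _].
by rewrite /= !(r_sym Iy).
Unshelve. all: by end_near. Qed.

Lemma kdot_dquot_self_le y v : I y -> I v -> v != y ->
  kdot r (dquot y v) (dquot y v) <= C.
Proof.
move=> Iy Iv vy; pose g x := r x v - r x y.
have r01_lip x : I x -> `|r01 v x - r01 y x| <= C * `|v - y|.
  move=> Ix; apply: (deriv_within_lipschitz I_itv (f := r01^~ x) (f' := r11^~ x)).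
  - by move=> z Iz; apply: r11_deriv.
  - by move=> z Iz; apply: r11_bound.
  - exact: Iy.
  - exact: Iv.
have g_lip : `|g v - g y| <= C * `|v - y| * `|v - y|.
  apply: (deriv_within_lipschitz I_itv (f' := fun x => r10 x v - r10 x y)) => //.
    move=> x Ix; apply: cvg_trans _ (cvgB (r10_deriv Ix Iv) (r10_deriv Ix Iy)).
    by apply: near_eq_cvg; near=> u; rewrite /g !fctE; ring.
  by move=> x Ix; rewrite !r10_r01 //; exact: r01_lip.
have -> : kdot r (dquot y v) (dquot y v) = (g v - g y) / (v - y) ^+ 2.
  by rewrite /kdot /dquot !big_cons !big_nil /g /=; field; rewrite subr_eq0.
have vy_gt0 : 0 < `|v - y| ^+ 2 by rewrite exprn_gt0 // normr_gt0 subr_eq0.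
apply: le_trans (ler_norm _) _.
by rewrite normrM normfV normrX ler_pdivrMr // expr2 mulrA.
Unshelve. all: by end_near. Qed.

(* The covariance of the combination u with the derivative Y'(t). *)
Definition dkdot (u : seq (R * R)) t := \sum_(p <- u) p.1 * r01 p.2 t.

Lemma dkdot_dquot y v t : dkdot (dquot y v) t = (r01 v t - r01 y t) / (v - y).
Proof. by rewrite /dkdot !big_cons big_nil /=; ring. Qed.

Lemma cvg_kdot_dquotr u t : I t -> {in u, forall p, I p.2} ->
  kdot r u (dquot t v) @[v --> dnbhs_in I t] --> dkdot u t.
Proof.
move=> It Iu; under eq_fun do rewrite kdot_dquotr.
apply: cvg_sum_seq => p /Iu Ip.
by apply: cvgM; [exact: cvg_cst | exact: r01_deriv].
Qed.

Section DerivativeApproximation.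
Variables (t eps : R).
Hypotheses (It : I t) (eps_gt0 : 0 < eps).

Local Notation rho := (r11 t t).
Local Notation close :=
  (fun v w => `|kdot r (dquot t v) (dquot t w) - rho| <= 2 * eps).

Lemma dquot_avg_self_le ws : ws != [::] -> {in ws, forall w, I w /\ w != t} ->
  pairwise close ws ->
  kdot r (dquot_avg t ws) (dquot_avg t ws) <= rho + 2 * eps + 2 * C / (size ws)%:R.
Proof.
move=> ws0 Iws pw; have N_gt0 : 0 < (size ws)%:R :> R by rewrite ltr0n lt0n size_eq0.
have rhoC : - C <= rho by have := r11_bound It It; rewrite ler_norml => /andP[].
have dqI w : w \in ws -> {in dquot t w, forall p, I p.2}.
  by move=> /Iws[Iw _]; apply: dquot_supp.
apply: le_trans (kdot_cavg_self_le (c := rho + 2 * eps) (d := C) _ _ _ _) _.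
- by rewrite -size_eq0 size_map size_eq0.
- move=> _ _ /mapP[v /dqI Iv ->] /mapP[w /dqI Iw ->].
  exact: (kdot_sym r_sym Iv Iw).
- by move=> _ /mapP[w /Iws[Iw wt] ->]; apply: kdot_dquot_self_le.
- rewrite pairwise_map; apply: sub_pairwise pw => v w.
  by rewrite /= ler_norml lerBlDl => /andP[].
have slack : C - (rho + 2 * eps) <= 2 * C by have := eps_gt0; lra.
by rewrite size_map lerD2l ler_pM2r ?invr_gt0.
Qed.

Lemma dquot_avg_cross_ge vs ws : vs != [::] -> ws != [::] -> allrel close vs ws ->
  rho - 2 * eps <= kdot r (dquot_avg t vs) (dquot_avg t ws).
Proof.
move=> vs0 ws0 /allrelP cl; apply: kdot_cavg_ge.
- by rewrite -size_eq0 size_map size_eq0.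
- by rewrite -size_eq0 size_map size_eq0.
move=> _ _ /mapP[v vvs ->] /mapP[w wws ->].
by have := cl v w vvs wws; rewrite ler_norml lerBrDl => /andP[].
Qed.

Lemma dquot_avg_dist_le vs ws (N : nat) : size vs = N -> size ws = N -> (0 < N)%N ->
  {in vs, forall v, I v /\ v != t} -> {in ws, forall w, I w /\ w != t} ->
  pairwise close vs -> pairwise close ws -> allrel close vs ws ->
  let D := cdiff (dquot_avg t vs) (dquot_avg t ws) in
  kdot r D D <= 4 * C / N%:R + 8 * eps.
Proof.
move=> vsN wsN N_gt0 Ivs Iws pvs pws cvw /=.
have [vs0 ws0] : vs != [::] /\ ws != [::] by rewrite -!size_eq0 vsN wsN -lt0n.
have Avs := dquot_avg_supp It (fun v vv => (Ivs v vv).1).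
have Aws := dquot_avg_supp It (fun w ww => (Iws w ww).1).
rewrite kdot_cdiff (kdot_sym r_sym Aws Avs).
have := dquot_avg_self_le vs0 Ivs pvs; have := dquot_avg_self_le ws0 Iws pws.
have := dquot_avg_cross_ge vs0 ws0 cvw; rewrite vsN wsN.
have := eps_gt0; rewrite -!mulrA; lra.
Qed.

Local Notation good := (fun v : R =>
  (I v /\ v != t) /\ `|(r01 v t - r01 t t) / (v - t) - rho| <= eps).

Lemma near_dquot_good : \forall v \near dnbhs_in I t, good v.
Proof.
near=> v; split; near: v; first exact: near_withinT.
have /cvgr_dist_le/(_ _ eps_gt0) := r11_deriv It It.
by apply: filterS => v; rewrite distrC.
Unshelve. all: by end_near. Qed.

Lemma near_dquot_close v : good v -> \forall w \near dnbhs_in I t, close v w.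
Proof.
move=> [[Iv _] gv]; have := cvg_kdot_dquotr It (dquot_supp It Iv).
rewrite dkdot_dquot => /cvgr_dist_le/(_ _ eps_gt0); apply: filterS => w kw.
rewrite /= -[2]/(1 + 1) mulrDl mul1r.
apply: le_trans (ler_distD ((r01 v t - r01 t t) / (v - t)) _ _) _.
by apply: lerD; first rewrite distrC.
Qed.

Lemma dquot_avg_approx (Q : set R) (lam : R) (N : nat) : 0 < lam -> (0 < N)%N ->
  (\forall v \near dnbhs_in I t, Q v) ->
  exists vs, [/\ vs != [::], {in vs, forall v, I v /\ Q v} &
    forall u, {in u, forall p, I p.2} -> kdot r u u <= C ->
      `|kdot r u (dquot_avg t vs) - dkdot u t|
        <= eps + (lam * C + (4 * C / N%:R + 8 * eps) / lam) / 2].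
Proof.
move=> lam_gt0 N_gt0 nearQ; have PF := proper_dnbhs_in It.
have nil_close z : z \in [::] -> \forall w \near dnbhs_in I t, close z w by [].
have [vs [vsN Qvs _ pvs]] := near_pairwise_seq (P := close) N
  (filterI near_dquot_good nearQ) (fun v gv => near_dquot_close gv.1) nil_close.
exists vs; split; first by rewrite -size_eq0 vsN -lt0n.
  by move=> v /Qvs[[[Iv _] _] Qv].
move=> u Iu uC; set A := dquot_avg t vs.
have near_u : \forall w \near dnbhs_in I t, `|kdot r u (dquot t w) - dkdot u t| <= eps.
  have /cvgr_dist_le/(_ _ eps_gt0) := cvg_kdot_dquotr It Iu.
  by apply: filterS => w; rewrite distrC.
(* A second average, adapted to u; A is L^2-close to it. *)
have [ws [wsN Qws cvw pws]] := near_pairwise_seq (P := close) (bs := vs) N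
  (filterI near_dquot_good near_u) (fun v gv => near_dquot_close gv.1)
  (fun v vvs => near_dquot_close (Qvs v vvs).1).
set A' := dquot_avg t ws.
have Ivs v : v \in vs -> I v /\ v != t by move=> /Qvs[[]].
have Iws w : w \in ws -> I w /\ w != t by move=> /Qws[[]].
have D_le := dquot_avg_dist_le vsN wsN N_gt0 Ivs Iws pvs pws cvw.
have suppD : {in cdiff A A', forall p, I p.2}.
  apply: cat_supp; last apply: cscale_supp.
    by apply: dquot_avg_supp It (fun v vvs => (Ivs v vvs).1).
  by apply: dquot_avg_supp It (fun w wws => (Iws w wws).1).
have := kdot_le_amgm r_sym r_psd Iu suppD lam_gt0; rewrite kdot_cdiffr => amgm.
have A'_close : `|kdot r u A' - dkdot u t| <= eps.
  rewrite kdot_cavgr; apply: avg_dist_le => [|_ /mapP[w wws ->]].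
    by rewrite -size_eq0 size_map wsN -lt0n.
  by have [] := Qws w wws.
apply: le_trans (ler_distD (kdot r u A') _ _) _; rewrite addrC lerD //.
apply: le_trans amgm _; rewrite ler_pM2r // lerD // ?ler_pM2l //.
by rewrite ler_pM2r ?invr_gt0.
Qed.

End DerivativeApproximation.

Lemma r11_sym s t : I s -> I t -> r11 s t = r11 t s.
Proof.
move=> Is It; apply/eqP; rewrite -subr_eq0 -normr_le0.
apply/ler_addgt0Pr => eta eta0; rewrite add0r; have PFs := proper_dnbhs_in Is.
have C0 : 0 <= C := le_trans (normr_ge0 _) (r11_bound Ia Ia).
have eta2 : 0 < eta / 2 by rewrite divr_gt0.
have [eps [lam [N [eps0 lam0 N0 small]]]] := approx_params C0 eta2.
pose psi v := (r01 v s - r01 t s) / (v - t).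
have near_psi : \forall v \near dnbhs_in I t, `|psi v - r11 t s| <= eta / 2.
  have /cvgr_dist_le/(_ _ eta2) := r11_deriv It Is.
  by apply: filterS => v; rewrite distrC.
have [vs [vs0 Ivs approx]] := dquot_avg_approx It eps0 lam0 N0 near_psi.
set A := dquot_avg t vs.
have A_lim : kdot r (dquot s u) A @[u --> dnbhs_in I s] -->
    (size vs)%:R^-1 * \sum_(v <- vs) psi v.
  under eq_fun do rewrite kdot_cavgr big_map size_map.
  apply: cvgM; first exact: cvg_cst.
  apply: cvg_sum_seq => v /Ivs[Iv _].
  have := cvg_kdot_dquotr Is (dquot_supp It Iv); rewrite dkdot_dquot.
  apply: cvg_trans; apply: near_eq_cvg; rewrite near_withinE; near=> u => -[Iu _].
  by rewrite /= (kdot_sym r_sym (dquot_supp Is Iu) (dquot_supp It Iv)).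
have close : \forall u \near dnbhs_in I s,
    `|(r01 u t - r01 s t) / (u - s) - kdot r (dquot s u) A| <= eta / 2.
  rewrite near_withinE; near=> u => -[Iu us].
  rewrite -dkdot_dquot distrC; apply: le_trans small.
  by apply: approx; [exact: dquot_supp | exact: kdot_dquot_self_le].
have lim_close : `|r11 s t - (size vs)%:R^-1 * \sum_(v <- vs) psi v| <= eta / 2.
  exact: cvgr_to_le (cvg_norm (cvgB (r11_deriv Is It) A_lim)) close.
have avg_close : `|(size vs)%:R^-1 * \sum_(v <- vs) psi v - r11 t s| <= eta / 2.
  by apply: avg_dist_le => // v /Ivs[].
apply: le_trans (ler_distD ((size vs)%:R^-1 * \sum_(v <- vs) psi v) _ _) _.
by rewrite [eta]splitr lerD.
Unshelve. all: by end_near. Qed.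

Lemma rab_swap p q x y : I x -> I y ->
  rab r r01 r10 r11 p q x y = rab r r01 r10 r11 q p y x.
Proof.
move=> Ix Iy; case: p; case: q => /=; first exact: r11_sym.
- exact: r10_r01.
- by rewrite r10_r01.
- exact: r_sym.
Qed.

End DifferentiableKernel.

Section Det4.
Context {R : comNzRingType}.

Lemma det_nat_expand n (f : nat -> nat -> R) :
  \det (\matrix_(i < n.+1, j < n.+1) f i j) =
  \sum_(j < n.+1) f 0 j * ((-1) ^+ j * \det (\matrix_(i < n, k < n) f i.+1 (bump j k))).
Proof.
rewrite (expand_det_row _ 0); apply: eq_bigr => j _.
rewrite mxE /cofactor add0n; congr (_ * (_ * \det _)).
by apply/matrixP => i k; rewrite !mxE.
Qed.

Definition minor2 (f : nat -> nat -> R) i i' j j' := f i j * f i' j' - f i j' * f i' j.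

Lemma det4_laplace02 (f : nat -> nat -> R) :
  \det (\matrix_(i < 4, j < 4) f i j) =
    minor2 f 0 2 0 2 * minor2 f 1 3 1 3 + minor2 f 0 2 1 3 * minor2 f 1 3 0 2
  - minor2 f 0 2 0 1 * minor2 f 1 3 2 3 - minor2 f 0 2 0 3 * minor2 f 1 3 1 2
  - minor2 f 0 2 1 2 * minor2 f 1 3 0 3 - minor2 f 0 2 2 3 * minor2 f 1 3 0 1.
Proof.
rewrite det_nat_expand !big_ord_recr !big_ord0 /=.
rewrite !(det_nat_expand _ (fun i k => f i.+1 (bump _ k))) !big_ord_recr !big_ord0 /=.
rewrite !(det_nat_expand _ (fun i k => f i.+2 (bump _ (bump _ k)))).
rewrite !big_ord_recr !big_ord0 /= !det_mx11 !mxE /minor2 /bump /=; ring.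
Qed.

Lemma det_nat2 (f : nat -> nat -> R) :
  \det (\matrix_(i < 2, j < 2) f i j) = minor2 f 0 1 0 1.
Proof.
by rewrite det_nat_expand !big_ord_recr big_ord0 /= !det_mx11 !mxE /minor2 /=; ring.
Qed.

End Det4.



Lemma det4_sub_minors_le {R : realDomainType} (f : nat -> nat -> R) (C M : R) :
  0 <= M -> M <= C ->
  (forall i j, odd i = odd j -> `|f i j| <= C) ->
  (forall i j, odd i != odd j -> `|f i j| <= M) ->
  `|\det (\matrix_(i < 4, j < 4) f i j) - minor2 f 0 2 0 2 * minor2 f 1 3 1 3|
    <= 20 * C ^+ 2 * M ^+ 2.
Proof.
move=> M0 MC fC fM; have C0 : 0 <= C := le_trans M0 MC.
pose bnd i j := if odd i == odd j then C else M.
have bnd0 i j : 0 <= bnd i j by rewrite /bnd; case: eqP.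
have fb i j : `|f i j| <= bnd i j by rewrite /bnd; case: eqP => [/fC|/eqP/fM].
have mb i i' j j' : `|minor2 f i i' j j'| <= bnd i j * bnd i' j' + bnd i j' * bnd i' j.
  apply: le_trans (ler_normB _ _) _.
  by rewrite !normrM lerD // ler_pM.
have pb i i' j j' k k' l l' : `|minor2 f i i' j j' * minor2 f k k' l l'| <=
    (bnd i j * bnd i' j' + bnd i j' * bnd i' j) *
    (bnd k l * bnd k' l' + bnd k l' * bnd k' l).
  by rewrite normrM ler_pM ?addr_ge0 ?mulr_ge0.
rewrite det4_laplace02.
have -> (A B P1 P2 P3 P4 : R) : A + B - P1 - P2 - P3 - P4 - A = B - P1 - P2 - P3 - P4.
  by ring.
have normB_le (x y a b : R) : `|x| <= a -> `|y| <= b -> `|x - y| <= a + b.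
  by move=> xa yb; apply: le_trans (ler_normB _ _) (lerD xa yb).
apply: le_trans (normB_le _ _ _ _ (normB_le _ _ _ _ (normB_le _ _ _ _
  (normB_le _ _ _ _ (pb _ _ _ _ _ _ _ _) (pb _ _ _ _ _ _ _ _))
  (pb _ _ _ _ _ _ _ _)) (pb _ _ _ _ _ _ _ _)) (pb _ _ _ _ _ _ _ _)) _.
have M4 : M * M * (M * M) <= C * C * (M * M).
  by rewrite ler_wpM2r ?mulr_ge0 ?ler_pM.
rewrite /bnd /= !expr2; nra.
Qed.

Section CrossCovarianceSup.
Context {R : realType} (I : set R) (r r01 r10 r11 : R -> R -> R) (C : R).
Hypothesis rab_bound :
  forall (p q : bool) x y, I x -> I y -> `|rab r r01 r10 r11 p q x y| <= C.
Variables s tau : R.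
Hypotheses (Is : I s) (Ist : I (s + tau)).

Let cross_covs := [set x : R | exists s, [/\ I s, I (s + tau) &
  exists p q, x = `|rab r r01 r10 r11 p q s (s + tau)|]].

Let cross_covs_ub : ubound cross_covs C.
Proof. by move=> _ [x [Ix Ixt [p [q ->]]]]; exact: rab_bound. Qed.

Let cross_covs_n0 : cross_covs !=set0.
Proof.
exists `|rab r r01 r10 r11 false false s (s + tau)|, s.
by split => //; exists false, false.
Qed.

Lemma Mtau_le : Mtau I r r01 r10 r11 tau <= C.
Proof. exact: ge_sup cross_covs_n0 cross_covs_ub. Qed.

Lemma rab_le_Mtau p q :
  `|rab r r01 r10 r11 p q s (s + tau)| <= Mtau I r r01 r10 r11 tau.
Proof.
apply: sup_upper_bound.
  by split; [exact: cross_covs_n0 | exists C; exact: cross_covs_ub].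
by exists s; split => //; exists p, q.
Qed.

End CrossCovarianceSup.

Unset Implicit Arguments.

Theorem lemma9 (R : realType) (d : measure_display) (T : measurableType d)
  (P : probability T R) (I : set R) (Y : R -> T -> R)
  (r r01 r10 r11 : R -> R -> R) (C : R) :
  is_interval I ->
  centered_gaussian_process P I Y ->
  (forall s t, I s -> I t -> ('E_P[Y s \* Y t])%E = (r s t)%:E) ->
  (forall s t, I s -> I t -> has_deriv_within I (fun v => r s v) t (r01 s t)) ->
  (forall s t, I s -> I t -> has_deriv_within I (fun u => r u t) s (r10 s t)) ->
  (forall s t, I s -> I t -> has_deriv_within I (fun u => r01 u t) s (r11 s t)) ->
  (forall (a b : bool) s t, I s -> I t -> `|rab r r01 r10 r11 a b s t| <= C) ->
  forall s tau, I s -> I (s + tau) ->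
    `|\det (Sigma r r01 r10 r11 s (s + tau))
       - \det (Omega r r01 r10 r11 s) * \det (Omega r r01 r10 r11 (s + tau))|
    <= 20 * C ^+ 2 * Mtau I r r01 r10 r11 tau ^+ 2.
Proof.
move=> I_itv [Y_meas _] E_YY r01_d r10_d r11_d rC s tau Is It.
set t := s + tau; set M := Mtau I r r01 r10 r11 tau.
have r_sym := cov_kernel_sym E_YY.
have r_psd := cov_kernel_psd Y_meas E_YY.
have stM p q : `|rab r r01 r10 r11 p q s t| <= M := rab_le_Mtau rC Is It p q.
have tsM p q : `|rab r r01 r10 r11 p q t s| <= M.
  have [tau0|tau0] := eqVneq tau 0; first by move: (stM p q); rewrite /t tau0 addr0.
  have st : s != t by rewrite /t -subr_eq0 opprD addrA subrr sub0r oppr_eq0.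
  have r11_bound x y : I x -> I y -> `|r11 x y| <= C := rC true true x y.
  have swap := rab_swap I_itv r_sym r_psd r01_d r10_d r11_d r11_bound Is It st.
  by rewrite swap.
pose f i j := rab r r01 r10 r11 (2 <= i)%N (2 <= j)%N
  (if odd i then t else s) (if odd j then t else s).
have detO x : \det (Omega r r01 r10 r11 x) =
    minor2 (fun i j => rab r r01 r10 r11 (i == 1)%N (j == 1)%N x x) 0 1 0 1.
  exact: det_nat2.
rewrite !detO.
apply: (det4_sub_minors_le (f := f)).
- exact: le_trans (normr_ge0 _) (stM false false).
- by have := Mtau_le rC Is It.
- by move=> i j _; apply: rC; case: (odd i); case: (odd j).
- by rewrite /f => i j; case: (odd i); case: (odd j).
Qed.
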